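(* Let $\mathcal F=(f_t)$ be a continuous flow on a compact metric space $(X,d)$, and suppose $\nu$ is an $(\mathcal F\times\mathcal F)$-invariant Borel probability measure on $X\times X$ which is product expansive at scale $\varepsilon$. Let $\gamma\in(0,\varepsilon/2)$ and for each $t>0$ let $\mathscr A_t$ be a partition adapted to a $(t,\gamma)$-separated set of maximal cardinality. Let $Q\subset X\times X$ be a measurable set with $(f_t\times f_s)Q=Q$ for all $t,s\in\mathbb{R}$. Then for every $\alpha>0$ there exists $t_0$ such that for every $t\ge t_0$ there is a set $U$ which is a union of elements of $\mathscr A_t$ with $\nu(U\triangle Q)<\alpha$.
   Context: $X\times X$ has metric $\tilde d((x,y),(w,z))=\max\{d(x,w),d(y,z)\}$ and product flow $(f_t\times f_t)$; Bowen balls $B_t(p,r)=\{q:\tilde d((f_s\times f_s)p,(f_s\times f_s)q)<r\ \forall s\in[0,t]\}$. A partition $\mathscr A$ is adapted to a maximal $(t,\gamma)$-separated set $E$ if each element $A$ satisfies $B_t(p,\gamma/2)\subset A\subset\overline{B_t}(p,\gamma)$ for some $p\in E$. Product expansive at scale $\varepsilon$: $\nu(\mathrm{NE}^\times(\varepsilon))=0$, where $\Gamma_\varepsilon(x,y)=\{(x',y'):\tilde d((f_tx,f_ty),(f_tx',f_ty'))<\varepsilon\ \forall t\in\mathbb{R}\}$ and $\mathrm{NE}^\times(\varepsilon)=\{(x,y):\Gamma_\varepsilon(x,y)\not\subset f_{[-s,s]}(x)\times f_{[-s,s]}(y)\text{ for any }s>0\}$, with $f_{[-s,s]}(x)=\{f_rx:r\in[-s,s]\}$.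 *)

From HB Require Import structures.
From mathcomp Require Import all_boot all_order all_algebra.
From mathcomp Require Import all_classical all_reals all_analysis.
Set Implicit Arguments. Unset Strict Implicit. Unset Printing Implicit Defensive.
Import Order.TTheory GRing.Theory Num.Theory.
Local Open Scope classical_set_scope.
Local Open Scope ring_scope.

Section Defs.
Context {R : realType}.

Definition is_metric {T : Type} (d : T -> T -> R) : Prop :=
  (forall x y, 0 <= d x y) /\ (forall x y, d x y = 0 <-> x = y) /\
  (forall x y, d x y = d y x) /\ (forall x y z, d x z <= d x y + d y z).

Definition dopen {T : Type} (d : T -> T -> R) (A : set T) : Prop :=
  forall x, A x -> exists2 r, 0 < r & forall y, d x y < r -> A y.

Definition dcompact {T : Type} (d : T -> T -> R) : Prop :=
  forall (I : Type) (U : I -> set T), (forall i, dopen d (U i)) ->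
  (forall x, exists i, U i x) ->
  exists2 J : set I, finite_set J & forall x, exists2 i, J i & U i x.

Definition is_cont_flow {T : Type} (d : T -> T -> R) (f : R -> T -> T) : Prop :=
  (forall x, f 0 x = x) /\ (forall t s x, f (t + s) x = f t (f s x)) /\
  (forall t x (e : R), 0 < e -> exists2 del, 0 < del & forall t' x',
      `|t - t'| < del -> d x x' < del -> d (f t x) (f t' x') < e).

Definition dprod {T : Type} (d : T -> T -> R) (p q : T * T) : R :=
  Num.max (d p.1 q.1) (d p.2 q.2).

Definition pflow {T : Type} (f : R -> T -> T) (t : R) (p : T * T) : T * T :=
  (f t p.1, f t p.2).

Definition Borel2 {T : Type} (d : T -> T -> R) : set (set (T * T)) :=
  dopen (dprod d).

Definition bowen {T : Type} (d : T -> T -> R) (f : R -> T -> T) (t : R)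
  (p : T * T) (r : R) : set (T * T) :=
  [set q | forall s, 0 <= s <= t -> dprod d (pflow f s p) (pflow f s q) < r].
Definition cbowen {T : Type} (d : T -> T -> R) (f : R -> T -> T) (t : R)
  (p : T * T) (r : R) : set (T * T) :=
  [set q | forall s, 0 <= s <= t -> dprod d (pflow f s p) (pflow f s q) <= r].

Definition separated {T : Type} (d : T -> T -> R) (f : R -> T -> T) (t g : R)
  (E : set (T * T)) : Prop :=
  forall p q, E p -> E q -> p <> q ->
    exists2 s, 0 <= s <= t & g < dprod d (pflow f s p) (pflow f s q).

Definition max_separated {T : Type} (d : T -> T -> R) (f : R -> T -> T) (t g : R)
  (E : set (T * T)) : Prop :=
  separated d f t g E /\
  forall F : set (T * T), separated d f t g F -> (F #<= E)%card.

Definition is_partition {T : Type} (P : set (set (T * T))) : Prop :=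
  (forall A B, P A -> P B -> A `&` B !=set0 -> A = B) /\
  (forall p, exists2 A, P A & A p).

Definition adapted {T : Type} (d : T -> T -> R) (f : R -> T -> T) (t g : R)
  (E : set (T * T)) (P : set (set (T * T))) : Prop :=
  is_partition P /\
  forall A, P A -> exists2 p, E p &
    bowen d f t p (g / 2) `<=` A /\ A `<=` cbowen d f t p g.

Definition Gamma {T : Type} (d : T -> T -> R) (f : R -> T -> T) (e : R)
  (p : T * T) : set (T * T) :=
  [set q | forall t, dprod d (pflow f t p) (pflow f t q) < e].

Definition orbseg {T : Type} (f : R -> T -> T) (s : R) (x : T) : set T :=
  [set y | exists2 r, - s <= r <= s & y = f r x].

Definition NEx {T : Type} (d : T -> T -> R) (f : R -> T -> T) (e : R) : set (T * T) :=
  [set p | forall s, 0 < s ->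
     ~ (Gamma d f e p `<=` orbseg f s p.1 `*` orbseg f s p.2)].

End Defs.

From HB Require Import structures.
From mathcomp Require Import all_boot all_order all_algebra.
From mathcomp Require Import all_classical all_reals all_analysis.
From mathcomp Require Import finmap lra.
Import Order.TTheory GRing.Theory Num.Theory.
Local Open Scope classical_set_scope.
Local Open Scope ring_scope.
Import numFieldNormedType.Exports.

(* By inner regularity choose a closed K inside Q with nu (Q \ K) small, and
   fix 2 gamma < c < eps.  Call p a (c, w)-shadow of K if on the time window
   [-w, w] its orbit stays c-close to the orbit of some point of K.  By
   compactness, a (c, n)-shadow for every n shadows one k in K for all times;
   then k lies in Gamma_eps(p), so off NE^x(eps) it lies on the product of the
   orbits of p, and p is in Q by the invariance of Q.  Hence the (c, n)-shadows
   outside Q have small measure for n large.  For t >= 2 n let U be the union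
   of the cells of A_t meeting the preimage of K under the time-t/2 product
   flow.  Cells have Bowen diameter at most 2 gamma < c on [0, t], so the
   preimage of U Delta Q under the time-(-t/2) flow lies in (Q \ K) together
   with the (c, n)-shadows outside Q, and the invariance of nu concludes. *)

Section FiniteBounds.
Context {R : realType} {I : choiceType}.

Lemma finite_set_pos_lbound (J : set I) (g : I -> R) :
  finite_set J -> (forall i, J i -> 0 < g i) ->
  exists2 m : R, 0 < m & forall i, J i -> m <= g i.
Proof.
move=> fJ g_gt0; exists (\big[Num.min/1]_(i <- fset_set J | i \in fset_set J) g i).
  by apply: lt_bigmin => // i; rewrite in_fset_set // => /set_mem; exact: g_gt0.
by move=> i Ji; apply: ge_bigmin_seq; rewrite in_fset_set //; exact: mem_set.
Qed.

Lemma finite_set_ubound (J : set I) (g : I -> R) :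
  finite_set J -> exists m : R, forall i, J i -> g i <= m.
Proof.
move=> fJ; exists (\big[Num.max/0]_(i <- fset_set J) g i) => i Ji.
by apply: le_bigmax_seq; rewrite // in_fset_set //; exact: mem_set.
Qed.

End FiniteBounds.

Lemma nonincreasing_measure_small {R : realType} {dT : measure_display}
    {T : measurableType dT} (mu : {measure set T -> \bar R}) (F : nat -> set T)
    (e : R) :
  (mu (F 0%N) < +oo)%E -> (forall n, measurable (F n)) ->
  (forall n, F n.+1 `<=` F n) -> \bigcap_n F n = set0 -> 0 < e ->
  exists n, (mu (F n) < e%:E)%E.
Proof.
move=> muF0 mF F_decr F_cap e_gt0.
have F_noninc : {homo F : n m / (n <= m)%N >-> (m <= n)%O}.
  by apply/nonincreasing_seqP => n; rewrite subsetEset; exact: F_decr.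
have := nonincreasing_cvg_mu muF0 mF _ F_noninc.
rewrite F_cap measure0 => /(_ measurable0 _ (open_ereal_lt' (lte_tofin e_gt0))).
by move=> [N _ /(_ N (leqnn N))]; exists N.
Qed.

Section Metric.
Context {R : realType} {X : choiceType} {d : X -> X -> R}.
Hypothesis dm : is_metric d.

Lemma dist_xx x : d x x = 0.
Proof. by case: dm => _ [/(_ x x) [_ ->]]. Qed.

Lemma dist_sym x y : d x y = d y x.
Proof. by case: dm => _ [_ []]. Qed.

Lemma dist_triangle x y z : d x z <= d x y + d y z.
Proof. by case: dm => _ [_ []]. Qed.

Lemma dprod_xx p : dprod d p p = 0.
Proof. by rewrite /dprod !dist_xx maxxx. Qed.

Lemma dprod_sym p q : dprod d p q = dprod d q p.
Proof. by rewrite /dprod dist_sym [d p.2 _]dist_sym. Qed.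

Lemma dprod_triangle p q r : dprod d p r <= dprod d p q + dprod d q r.
Proof.
rewrite /dprod ge_max; apply/andP; split.
  by apply: le_trans (dist_triangle _ q.1 _) _; apply: lerD; rewrite le_max lexx.
by apply: le_trans (dist_triangle _ q.2 _) _; apply: lerD; rewrite le_max lexx orbT.
Qed.

Lemma dprod_ltP p q e : dprod d p q < e <-> d p.1 q.1 < e /\ d p.2 q.2 < e.
Proof. by rewrite /dprod gt_max; split => [/andP[]|[-> ->]]. Qed.

Lemma dopen_ball x r : dopen d [set y | d x y < r].
Proof.
move=> y /= dxy; exists (r - d x y) => [|z dyz]; first by rewrite subr_gt0.
by apply: le_lt_trans (dist_triangle _ y _) _; rewrite -ltrBrDl.
Qed.

Lemma dopen_dprod_ball p r : dopen (dprod d) [set q | dprod d p q < r].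
Proof.
move=> q /= dpq; exists (r - dprod d p q) => [|q' dqq']; first by rewrite subr_gt0.
by apply: le_lt_trans (dprod_triangle _ q _) _; rewrite -ltrBrDl.
Qed.

Hypothesis dc : dcompact d.

(* Tube lemma: finitely many balls around points y0 cover the fibre {x} * X,
   and so does a ball around x small enough for all of them. *)
Lemma dcompact_dprod : dcompact (dprod d).
Proof.
move=> I U U_open U_cover.
have /choice[g gP] : forall p : X * X, exists ir : I * R,
    0 < ir.2 /\ forall q, dprod d p q < ir.2 -> U ir.1 q.
  move=> p; have [i Uip] := U_cover p; have [r r_gt0 rU] := U_open i p Uip.
  by exists (i, r).
have r_gt0 p : 0 < (g p).2 by case: (gP p).
have /choice[Jy JyP] : forall x : X, exists J : set X, finite_set J /\
    forall y, exists2 y0, J y0 & d y0 y < (g (x, y0)).2.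
  move=> x; have [|J fJ JP] :=
    dc _ (fun y0 => [set y | d y0 y < (g (x, y0)).2]) (fun y0 => dopen_ball y0 _).
    by move=> y; exists y; rewrite /= dist_xx.
  by exists J.
have /choice[rho rhoP] : forall x : X, exists r : R, 0 < r /\
    forall y0, Jy x y0 -> r <= (g (x, y0)).2.
  move=> x; have [r r_gt0' rP] := finite_set_pos_lbound _ (fun y0 => (g (x, y0)).2)
    (proj1 (JyP x)) (fun y0 _ => r_gt0 (x, y0)).
  by exists r.
have [|Jx fJx JxP] := dc _ (fun x => [set x' | d x x' < rho x]) (fun x => dopen_ball x _).
  by move=> x; exists x; rewrite /= dist_xx; case: (rhoP x).
exists (\bigcup_(x in Jx) [set (g (x, y0)).1 | y0 in Jy x]).
  by apply: bigcup_finite => // x _; apply: finite_image; case: (JyP x).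
move=> [x' y']; have [x Jxx dxx'] := JxP x'; have [y0 Jyy0 dy0y'] := (proj2 (JyP x)) y'.
exists (g (x, y0)).1; first by exists x => //; exists y0.
case: (gP (x, y0)) => _; apply; apply/dprod_ltP; split => //=.
exact: lt_le_trans dxx' ((proj2 (rhoP x)) y0 Jyy0).
Qed.

Lemma dprod_finite_net r : 0 < r ->
  exists2 N : set (X * X), finite_set N & forall p, exists2 z, N z & dprod d z p < r.
Proof.
move=> r_gt0.
apply: (dcompact_dprod _ (fun z => [set q | dprod d z q < r]) (dopen_dprod_ball ^~ r)).
by move=> p; exists p; rewrite /= dprod_xx.
Qed.

End Metric.

Section Flow.
Context {R : realType} {X : choiceType} {d : X -> X -> R} {f : R -> X -> X}.
Hypotheses (dm : is_metric d) (fl : is_cont_flow d f).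

Lemma flow0 x : f 0 x = x.
Proof. by case: fl. Qed.

Lemma flowD t s x : f (t + s) x = f t (f s x).
Proof. by case: fl => _ []. Qed.

Lemma flowK t x : f (- t) (f t x) = x.
Proof. by rewrite -flowD addNr flow0. Qed.

Lemma flowKV t x : f t (f (- t) x) = x.
Proof. by rewrite -flowD subrr flow0. Qed.

Lemma pflowD t s p : pflow f t (pflow f s p) = pflow f (t + s) p.
Proof. by rewrite /pflow /= !flowD. Qed.

Lemma pflowKV t p : pflow f t (pflow f (- t) p) = p.
Proof. by case: p => x y; rewrite /pflow /= !flowKV. Qed.

Lemma biinvariantP (Q : set (X * X)) :
  (forall t s, [set (f t p.1, f s p.2) | p in Q] = Q) ->
  forall t s p, Q (f t p.1, f s p.2) <-> Q p.
Proof.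
move=> Q_inv t s [x y] /=; split => [Qp|Qp]; last by rewrite -(Q_inv t s); exists (x, y).
by rewrite -(Q_inv (- t) (- s)); exists (f t x, f s y); rewrite //= !flowK.
Qed.

Lemma flow_ucontinuous a b x e : 0 < e ->
  exists2 del, 0 < del & forall x', d x x' < del ->
    forall s, a <= s <= b -> d (f s x) (f s x') < e.
Proof.
move=> e_gt0; have e2_gt0 : 0 < e / 2 by rewrite divr_gt0.
have /choice[del delP] : forall s, exists del, 0 < del /\ forall t x',
    `|s - t| < del -> d x x' < del -> d (f s x) (f t x') < e / 2.
  by move=> s; case: fl => _ [_ /(_ s x _ e2_gt0) [del]]; exists del.
have ab_compact : @cover_compact R `[a, b]%classic.
  by rewrite -compact_cover; exact: segment_compact.
have [|D' _ D'cover] := ab_compact R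
  `[a, b]%classic (fun s => ball s (del s)) (fun s _ => ball_open s (del s)).
  by move=> s abs; exists s => //; apply: ballxx; case: (delP s).
have [m m_gt0 mP] := finite_set_pos_lbound _ del (finite_fset D')
  (fun s _ => proj1 (delP s)).
exists m => // x' dxx' s abs.
have /D'cover[s0 /= D's0] : `[a, b]%classic s by rewrite /= in_itv.
rewrite -ball_normE /= => s0s.
have near_x' := (proj2 (delP s0)) s x' s0s (lt_le_trans dxx' (mP s0 D's0)).
have near_x := (proj2 (delP s0)) s x s0s ltac:(by rewrite (dist_xx dm); case: (delP s0)).
apply: le_lt_trans (dist_triangle dm _ (f s0 x) _) _.
by rewrite (splitr e) (dist_sym dm); apply: ltrD.
Qed.

Lemma pflow_ucontinuous a b p e : 0 < e ->
  exists2 del, 0 < del & forall q, dprod d p q < del ->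
    forall s, a <= s <= b -> dprod d (pflow f s p) (pflow f s q) < e.
Proof.
move=> e_gt0; have [del1 del1_gt0 del1P] := flow_ucontinuous a b p.1 _ e_gt0.
have [del2 del2_gt0 del2P] := flow_ucontinuous a b p.2 _ e_gt0.
exists (Num.min del1 del2) => [|q /dprod_ltP[pq1 pq2] s abs].
  by rewrite lt_min del1_gt0 del2_gt0.
apply/dprod_ltP; split => /=.
  by apply: del1P => //; apply: lt_le_trans pq1 _; rewrite ge_min lexx.
by apply: del2P => //; apply: lt_le_trans pq2 _; rewrite ge_min lexx orbT.
Qed.

End Flow.

Section OpenSets.
Context {R : realType} {T : Type} (D : T -> T -> R).

Definition dclosed (K : set T) := dopen D (~` K).

Lemma dopen_bigcup (I : Type) (J : set I) (U : I -> set T) :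
  (forall i, J i -> dopen D (U i)) -> dopen D (\bigcup_(i in J) U i).
Proof.
move=> U_open x [i Ji Uix]; have [r r_gt0 rU] := U_open i Ji x Uix.
by exists r => // y /rU; exists i.
Qed.

Lemma dclosed_bigcup_finite (I : choiceType) (J : set I) (K : I -> set T) :
  finite_set J -> (forall i, J i -> dclosed (K i)) -> dclosed (\bigcup_(i in J) K i).
Proof.
move=> fJ K_closed p /= notKp.
have /choice[r rP] : forall i, exists r : R, 0 < r /\
    (J i -> forall q, D p q < r -> ~ K i q).
  move=> i; have [Ji|notJi] := pselect (J i); last by exists 1.
  have [r r_gt0 rP] := K_closed i Ji p (fun Kip => notKp (ex_intro2 _ _ i Ji Kip)).
  by exists r; split => // _ q /rP.
have [m m_gt0 mP] := finite_set_pos_lbound _ r fJ (fun i _ => proj1 (rP i)).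
exists m => // q pq [i Ji]; apply: (proj2 (rP i)) => //.
exact: lt_le_trans pq (mP i Ji).
Qed.

End OpenSets.

Section BorelProduct.
Context {R : realType} {X : pointedType} {d : X -> X -> R}.
Local Notation T := (g_sigma_algebraType (Borel2 d)).

Lemma dopen_measurable (U : set T) : dopen (dprod d) U -> measurable U.
Proof. exact: sub_gen_smallest. Qed.

Lemma dclosed_measurable (K : set T) : dclosed (dprod d) K -> measurable K.
Proof.
by move=> K_closed; rewrite -(setCK K); apply: measurableC; exact: dopen_measurable.
Qed.

Lemma pflow_preimage_measurable (f : R -> X -> X) s (B : set T) :
  is_metric d -> is_cont_flow d f -> measurable B ->
  measurable (pflow f s @^-1` B : set T).
Proof.
move=> dm fl; move: B.
suff sub : <<s Borel2 d>> `<=`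
    [set B : set T | measurable (pflow f s @^-1` B : set T)] by exact: sub.
apply: smallest_sub => [|U U_open].
  split => [|A mA|F mF] /=.
  - by rewrite preimage_set0; exact: measurable0.
  - exact: measurableD measurableT mA.
  - by rewrite preimage_bigcup; exact: bigcupT_measurable.
apply: dopen_measurable => p /U_open[r r_gt0 rU].
have [del del_gt0 delP] := pflow_ucontinuous dm fl s s p _ r_gt0.
by exists del => // q /delP/(_ s); rewrite lexx => /(_ isT)/rU.
Qed.

Variable nu : {finite_measure set T -> \bar R}.

Lemma finite_measure_lty (A : set T) : measurable A -> (nu A < +oo)%E.
Proof. by move=> mA; rewrite -ge0_fin_numE ?measure_ge0 ?fin_num_measure. Qed.

Lemma measure_bigcup_tail_small (B : nat -> set T) e :
  (forall n, measurable (B n)) -> 0 < e ->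
  exists N, (nu (\bigcup_n B n `\` \bigcup_(n in `I_N) B n) < e%:E)%E.
Proof.
move=> mB e_gt0.
have mtail N : measurable (\bigcup_n B n `\` \bigcup_(n in `I_N) B n).
  by apply: measurableD; [exact: bigcupT_measurable|exact: bigcup_measurable].
apply: nonincreasing_measure_small _ _ _ (finite_measure_lty _ (mtail 0%N)) mtail _ _ e_gt0.
  move=> N p [Bp notBp]; split => // -[n /= nN Bnp].
  by apply: notBp; exists n => //=; exact: ltnW.
apply/seteqP; split => [p /= tail|]; last exact: sub0set.
have [[m _ Bmp] _] := tail 0%N I.
by have [_] := tail m.+1 I; apply; exists m => /=.
Qed.

Definition regular_set (B : set T) := measurable B /\ forall e : R, 0 < e ->
  exists K U, [/\ dclosed (dprod d) K, dopen (dprod d) U, K `<=` B, B `<=` U &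
     (nu (U `\` K) < e%:E)%E].

Hypothesis dm : is_metric d.

Lemma regular_set_dopen (U : set T) : dopen (dprod d) U -> regular_set U.
Proof.
move=> U_open; split => [|e e_gt0]; first exact: dopen_measurable.
pose F (m : nat) : set T := [set p | forall q, dprod d p q < m.+1%:R^-1 -> U q].
have F_closed m : dclosed (dprod d) (F m).
  move=> p /= /existsNP[q /not_implyP[pq notUq]].
  exists (m.+1%:R^-1 - dprod d p q) => [|p' pp' Fp']; first by rewrite subr_gt0.
  apply/notUq/Fp'; apply: le_lt_trans (dprod_triangle dm _ p _) _.
  by rewrite dprod_sym // -ltrBrDr.
have [N nuN] : exists N, (nu (U `\` F N) < e%:E)%E.
  have mUF n : measurable (U `\` F n).
    by apply: measurableD; [exact: dopen_measurable|exact: dclosed_measurable].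
  apply: nonincreasing_measure_small _ _ _ (finite_measure_lty _ (mUF 0%N)) mUF _ _ e_gt0.
    move=> n p [Up notFp]; split => // Fp; apply: notFp => q pq; apply: Fp.
    by apply: lt_le_trans pq _; rewrite lef_pV2 ?posrE // ler_nat.
  apply/seteqP; split => [p /= UF|]; last exact: sub0set.
  have [[Up _] [r r_gt0 rU]] := (UF 0%N I, U_open p (proj1 (UF 0%N I))).
  have [_] := UF (Num.truncn r^-1) I; apply => q pq; apply: rU.
  by apply: lt_le_trans pq _; rewrite invf_ple ?posrE //; apply/ltW/truncnS_gt.
exists (F N), U; split => // p Fp; apply: Fp; rewrite dprod_xx // invr_gt0.
Qed.

Lemma regular_setC (B : set T) : regular_set B -> regular_set (~` B).
Proof.
move=> [mB approxB]; split => [|e e_gt0]; first exact: measurableC.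
have [K [U [K_closed U_open KB BU nuUK]]] := approxB e e_gt0.
exists (~` U), (~` K); split => //; first by rewrite /dclosed setCK.
- exact: subsetC.
- exact: subsetC.
by rewrite setDE setCK setIC -setDE.
Qed.

Lemma regular_set_bigcup (B : nat -> set T) :
  (forall n, regular_set (B n)) -> regular_set (\bigcup_n B n).
Proof.
move=> regB; have mB n : measurable (B n) by case: (regB n).
split => [|e e_gt0]; first exact: bigcupT_measurable.
have e2_gt0 : 0 < e / 2 by rewrite divr_gt0.
have /choice[KU KUP] n : exists KU : set T * set T,
    [/\ dclosed (dprod d) KU.1, dopen (dprod d) KU.2, KU.1 `<=` B n, B n `<=` KU.2 &
     (nu (KU.2 `\` KU.1) < (e / 2 / (2 ^ n.+1)%:R)%:E)%E].
  have [_ /(_ (e / 2 / (2 ^ n.+1)%:R))[|K [U KU]]] := regB n.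
    by rewrite divr_gt0 // ltr0n expn_gt0.
  by exists (K, U).
have [N nuN] := measure_bigcup_tail_small _ _ mB e2_gt0.
have K_closed n : dclosed (dprod d) (KU n).1 by case: (KUP n).
have U_open n : dopen (dprod d) (KU n).2 by case: (KUP n).
have mKU n : measurable ((KU n).2 `\` (KU n).1).
  by apply: measurableD; [exact: dopen_measurable|exact: dclosed_measurable].
exists (\bigcup_(n in `I_N) (KU n).1), (\bigcup_n (KU n).2); split.
- by apply: dclosed_bigcup_finite => // n _.
- by apply: dopen_bigcup => n _.
- by move=> p [n Nn Knp]; exists n => //; case: (KUP n) => _ _ + _ _; apply.
- by move=> p [n _ Bnp]; exists n => //; case: (KUP n) => _ _ _ + _; apply.
have mK : measurable (\bigcup_(n in `I_N) (KU n).1 : set T).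
  by apply: dclosed_measurable; apply: dclosed_bigcup_finite => // n _.
have mU : measurable (\bigcup_n (KU n).2 : set T).
  by apply: bigcupT_measurable => n; exact: dopen_measurable.
pose tail := \bigcup_n B n `\` \bigcup_(n in `I_N) B n.
have mtail : measurable tail.
  by apply: measurableD; [exact: bigcupT_measurable|exact: bigcup_measurable].
have mgaps := bigcupT_measurable _ mKU.
have gaps : (nu (\bigcup_n ((KU n).2 `\` (KU n).1)) <= (e / 2)%:E)%E.
  have := measure_sigma_subadditive nu mKU mgaps (@subset_refl _ _).
  move/le_trans; apply.
  apply: le_trans (epsilon_trick0 xpredT (ltW e2_gt0)).
  by apply: lee_nneseries => n _ //; case: (KUP n) => _ _ _ _ /ltW.
have split_gap : \bigcup_n (KU n).2 `\` \bigcup_(n in `I_N) (KU n).1 `<=`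
    tail `|` \bigcup_n ((KU n).2 `\` (KU n).1).
  move=> p [[m _ Ump] notKp].
  have [[j jN Bjp]|notBp] := pselect ((\bigcup_(n in `I_N) B n) p).
    right; exists j => //; split; first by case: (KUP j) => _ _ _ + _; apply.
    by move=> Kjp; apply: notKp; exists j.
  have [Bp|notBp'] := pselect ((\bigcup_n B n) p); first by left.
  right; exists m => //; split => // Kmp; apply: notBp'; exists m => //.
  by case: (KUP m) => _ _ + _ _; apply.
have := le_measure nu (mem_set (measurableD mU mK)) (mem_set (measurableU _ _ mtail mgaps))
  split_gap.
move/le_lt_trans; apply; have := measureU2 nu mtail mgaps.
move/le_lt_trans; apply.
rewrite [e in (_ < e%:E)%E](splitr e) EFinD.
by apply: lte_leD => //; rewrite ge0_fin_numE // finite_measure_lty.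
Qed.

Lemma regular_set_sigma_algebra : sigma_algebra setT regular_set.
Proof.
split => [|B /regular_setC|]; last exact: regular_set_bigcup.
  by apply: regular_set_dopen => p [].
by rewrite setTD.
Qed.

Lemma dclosed_inner_approx (B : set T) e : measurable B -> 0 < e ->
  exists K, [/\ dclosed (dprod d) K, K `<=` B & (nu (B `\` K) < e%:E)%E].
Proof.
move=> mB e_gt0.
have [_ /(_ e e_gt0)[K [U [K_closed U_open KB BU nuUK]]]] : regular_set B.
  by apply: (smallest_sub regular_set_sigma_algebra _ mB) => U; exact: regular_set_dopen.
have mK := dclosed_measurable _ K_closed.
exists K; split => //; apply: le_lt_trans nuUK; apply: le_measure.
- exact/mem_set/measurableD.
- by apply/mem_set/measurableD => //; exact: dopen_measurable.
by move=> p [Bp notKp]; split => //; exact: BU.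
Qed.

End BorelProduct.

(* The margin r < c makes the set open. *)
Definition shadowing {R : realType} {X : Type} (d : X -> X -> R) (f : R -> X -> X)
    (K : set (X * X)) (c w : R) : set (X * X) :=
  [set p | exists2 k, K k & exists2 r, r < c & forall s, - w <= s <= w ->
     dprod d (pflow f s p) (pflow f s k) <= r].

Section Shadowing.
Context {R : realType} {X : choiceType} {d : X -> X -> R} {f : R -> X -> X}.
Hypotheses (dm : is_metric d) (dc : dcompact d) (fl : is_cont_flow d f).

Lemma dopen_shadowing K c w : dopen (dprod d) (shadowing d f K c w).
Proof.
move=> p [k Kk [r rc rP]].
have cr_gt0 : 0 < (c - r) / 2 by rewrite divr_gt0 // subr_gt0.
have [del del_gt0 delP] := pflow_ucontinuous dm fl (- w) w p _ cr_gt0.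
exists del => // q pq; exists k => //; exists (r + (c - r) / 2) => [|s sw].
  by rewrite -ltrBrDl ltr_pdivrMr // ltr_pMr ?subr_gt0 // ltr1n.
apply: le_trans (dprod_triangle dm _ (pflow f s p) _) _.
by rewrite addrC lerD ?rP // dprod_sym // ltW ?delP.
Qed.

Lemma subset_shadowing K c w w' : w <= w' -> shadowing d f K c w' `<=` shadowing d f K c w.
Proof.
move=> ww' p [k Kk [r rc rP]]; exists k => //; exists r => // s /andP[ws sw].
by apply: rP; rewrite (le_trans _ ws) ?lerN2 // (le_trans sw).
Qed.

(* Otherwise each k in K is c-separated from p at some time s_k, an open
   condition in k; a finite subcover of X * X by these sets and ~` K bounds
   the s_k, contradicting shadowing on a long enough window. *)
Lemma shadowing_forever K p c : dclosed (dprod d) K ->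
  (forall n : nat, exists2 k, K k & forall s, - n%:R <= s <= n%:R ->
      dprod d (pflow f s p) (pflow f s k) <= c) ->
  exists2 k, K k & forall s, dprod d (pflow f s p) (pflow f s k) <= c.
Proof.
move=> K_closed shadow; apply: contrapT => never.
have /choice[sep sepP] : forall k, exists s : R,
    K k -> c < dprod d (pflow f s p) (pflow f s k).
  move=> k; have [Kk|] := pselect (K k); last by exists 0.
  apply: contrapT => none; apply: never; exists k => // s; rewrite leNgt.
  by apply/negP => ck; apply: none; exists s.
pose U (o : option (X * X)) : set (X * X) := if o is Some k
  then [set q | c < dprod d (pflow f (sep k) p) (pflow f (sep k) q)] else ~` K.
have U_open o : dopen (dprod d) (U o).
  case: o => [k|//] q /= cq; move: (cq); rewrite -subr_gt0.
  move=> /(pflow_ucontinuous dm fl (sep k) (sep k) q)[del del_gt0 delP].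
  exists del => // q' /delP/(_ (sep k)); rewrite lexx => /(_ isT) qq'.
  have := dprod_triangle dm (pflow f (sep k) p) (pflow f (sep k) q') (pflow f (sep k) q).
  rewrite (dprod_sym dm (pflow f (sep k) q')); lra.
have [|J fJ JU] := dcompact_dprod dm dc _ U U_open.
  by move=> q; have [Kq|] := pselect (K q); [exists (Some q); exact: sepP | exists None].
have [M MP] := finite_set_ubound _ (fun o => if o is Some k then `|sep k| else 0) fJ.
have [k Kk kP] := shadow (Num.truncn M).+1.
have [[k0|] Jo /= Uk] := JU k; last by [].
have sep_k0 : - (Num.truncn M).+1%:R <= sep k0 <= (Num.truncn M).+1%:R.
  by rewrite -ler_norml (le_trans (MP _ Jo)) // ltW // truncnS_gt.
by move: (kP _ sep_k0); rewrite leNgt Uk.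
Qed.

Lemma bigcap_shadowing_setD_subset K Q c eps : dclosed (dprod d) K -> K `<=` Q ->
  (forall t s, [set (f t p.1, f s p.2) | p in Q] = Q) -> c < eps ->
  \bigcap_(n : nat) (shadowing d f K c n%:R `\` Q) `<=` NEx d f eps.
Proof.
move=> K_closed KQ Q_inv c_eps p shadow_notQ s s_gt0 Gamma_sub.
have notQp : ~ Q p by case: (shadow_notQ 0%N I).
have [|k Kk kP] := shadowing_forever K p c K_closed.
  move=> n; have [[k Kk [r rc rP]] _] := shadow_notQ n I.
  by exists k => // u /rP/le_trans; apply; exact: ltW.
have [[r1 _ k1] [r2 _ k2]] := Gamma_sub k (fun u => le_lt_trans (kP u) c_eps).
apply/notQp/(biinvariantP fl Q Q_inv r1 r2 p).
by rewrite -k1 -k2 -surjective_pairing; exact: KQ.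
Qed.

End Shadowing.

Definition cells_meeting {T : Type} (P : set (set T)) (B : set T) : set (set T) :=
  [set C | P C /\ C `&` B !=set0].

Lemma bigcup_cells_meeting_sup {T : Type} (P : set (set (T * T))) B :
  is_partition P -> B `<=` \bigcup_(C in cells_meeting P B) C.
Proof.
move=> [_ P_cover] p Bp; have [C PC Cp] := P_cover p.
by exists C => //; split => //; exists p.
Qed.

Section AdaptedPartition.
Context {R : realType} {X : choiceType} {d : X -> X -> R} {f : R -> X -> X}.
Hypotheses (dm : is_metric d) (fl : is_cont_flow d f).
Variables (t g : R) (E : set (X * X)) (P : set (set (X * X))).
Hypothesis adP : adapted d f t g E P.

Lemma adapted_cell_dprod_le C p q s : P C -> C p -> C q -> 0 <= s <= t ->
  dprod d (pflow f s p) (pflow f s q) <= 2 * g.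
Proof.
move=> PC Cp Cq st; have [c _ [_ Cc]] := adP.2 C PC.
have := dprod_triangle dm (pflow f s p) (pflow f s c) (pflow f s q).
have := Cc p Cp s st; have := Cc q Cq s st.
by rewrite (dprod_sym dm (pflow f s p) (pflow f s c)); lra.
Qed.

Lemma cells_meeting_shadowing K c tau (n : R) : 2 * g < c -> n <= tau -> tau + n <= t ->
  \bigcup_(C in cells_meeting P (pflow f tau @^-1` K)) C `<=`
  pflow f tau @^-1` shadowing d f K c n.
Proof.
move=> gc n_tau tau_t p [C [PC [q [Cq Kq]]] Cp].
exists (pflow f tau q) => //; exists (2 * g) => // s /andP[ns sn].
rewrite !(pflowD fl); apply: adapted_cell_dprod_le PC Cp Cq _; apply/andP; lra.
Qed.

Lemma pflow_preimage_symdiff_subset K Q c tau (n : R) :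
  (forall t s, [set (f t p.1, f s p.2) | p in Q] = Q) ->
  2 * g < c -> n <= tau -> tau + n <= t ->
  let V := \bigcup_(C in cells_meeting P (pflow f tau @^-1` K)) C in
  pflow f (- tau) @^-1` (V `\` Q `|` (Q `\` V)) `<=`
  (Q `\` K) `|` (shadowing d f K c n `\` Q).
Proof.
move=> Q_inv gc n_tau tau_t V p [[Vp notQp]|[Qp notVp]].
  right; split; last by move/(biinvariantP fl Q Q_inv (- tau) (- tau) p).
  by have := cells_meeting_shadowing K c tau n gc n_tau tau_t _ Vp; rewrite /= (pflowKV fl).
left; split; first exact/(biinvariantP fl Q Q_inv (- tau) (- tau) p).
by move=> Kp; apply/notVp/(bigcup_cells_meeting_sup _ _ adP.1); rewrite /= (pflowKV fl).
Qed.

End AdaptedPartition.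

Section Measures.
Context {R : realType} {X : pointedType} {d : X -> X -> R} {f : R -> X -> X}.
Hypotheses (dm : is_metric d) (dc : dcompact d) (fl : is_cont_flow d f).
Local Notation T := (g_sigma_algebraType (Borel2 d)).

(* Every cell contains a Bowen ball, hence a point of each fine enough finite
   net; so a union of cells is a countable union of cells. *)
Lemma bigcup_adapted_measurable t g E P (S : set (set (X * X))) :
  0 < g -> adapted d f t g E P -> (forall C, P C -> measurable (C : set T)) ->
  S `<=` P -> measurable (\bigcup_(C in S) C : set T).
Proof.
move=> g_gt0 [[P_disj _] P_bowen] mP SP.
have /choice[N NP] (j : nat) : exists N : set (X * X), finite_set N /\
    forall p, exists2 z, N z & dprod d z p < j.+1%:R^-1.
  by have [|N fN NP] := dprod_finite_net dm dc (j.+1%:R^-1); [rewrite invr_gt0|exists N].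
pose W z : set T := \bigcup_(C in [set C | S C /\ C z]) C.
have mW z : measurable (W z).
  have [[C0 [SC0 C0z]]|none] := pselect (exists C, S C /\ C z).
    suff -> : W z = C0 by apply: mP; exact: SP.
    apply/seteqP; split => [p [C [SC Cz] Cp]|p C0p]; last by exists C0.
    by rewrite -(P_disj C C0 (SP C SC) (SP C0 SC0)) //; exists z.
  suff -> : W z = set0 by exact: measurable0.
  by apply/seteqP; split => // p [C SCz]; case: none; exists C.
suff -> : \bigcup_(C in S) C = \bigcup_j \bigcup_(z in N j) W z.
  by apply: bigcupT_measurable => j; apply: fin_bigcup_measurable; case: (NP j).
apply/seteqP; split => [p [C SC Cp]|p [j _ [z _ [C [SC _] Cp]]]]; last by exists C.
have [c _ [c_bowen _]] := P_bowen C (SP C SC).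
have [del del_gt0 delP] := pflow_ucontinuous dm fl 0 t c (g / 2) ltac:(by rewrite divr_gt0).
pose j := Num.truncn del^-1.
have [z Nz zc] := (proj2 (NP j)) c.
exists j => //; exists z => //; exists C => //; split => //; apply: c_bowen => s st.
apply: delP => //; rewrite dprod_sym //; apply: lt_trans zc _.
by rewrite invf_plt ?posrE // truncnS_gt.
Qed.

Lemma shadowing_measurable K c w : measurable (shadowing d f K c w : set T).
Proof. by apply: dopen_measurable; exact: dopen_shadowing. Qed.

Lemma shadowing_setD_small (nu : {finite_measure set T -> \bar R}) K (Q : set T) c eps e :
  dclosed (dprod d) K -> K `<=` Q ->
  (forall t s, [set (f t p.1, f s p.2) | p in Q] = Q) -> c < eps ->
  measurable Q -> nu.-negligible (NEx d f eps : set T) -> 0 < e ->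
  exists n : nat, (nu (shadowing d f K c n%:R `\` Q : set T) < e%:E)%E.
Proof.
move=> K_closed KQ Q_inv c_eps mQ [N [mN nuN NE_N]] e_gt0.
have mS n : measurable (shadowing d f K c n%:R `\` Q : set T).
  by apply: measurableD => //; exact: shadowing_measurable.
have mSN n := measurableD (mS n) mN.
have [||n nu_n] :=
  nonincreasing_measure_small _ _ _ (finite_measure_lty nu _ (mSN 0%N)) mSN _ _ e_gt0.
- move=> n p [[Sp notQp] notNp]; split => //; split => //.
  by apply: subset_shadowing Sp; rewrite ler_nat.
- apply/seteqP; split => [p /= SQN|]; last exact: sub0set.
  have [_ notNp] := SQN 0%N I; apply/notNp/NE_N.
  apply: (bigcap_shadowing_setD_subset dm dc fl _ _ _ _ K_closed KQ Q_inv c_eps p) => m _.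
  by case: (SQN m I).
have S_sub : shadowing d f K c n%:R `\` Q `<=` (shadowing d f K c n%:R `\` Q `\` N) `|` N.
  by move=> p Sp; have [Np|notNp] := pselect (N p); [right|left].
exists n; apply: le_lt_trans nu_n; rewrite -(measureU0 (mu := nu) (mSN n) mN nuN).
exact: le_measure (mem_set (mS n)) (mem_set (measurableU _ _ (mSN n) mN)) S_sub.
Qed.

End Measures.

Theorem proposition4p7 (R : realType) (X : pointedType) (d : X -> X -> R)
  (f : R -> X -> X)
  (nu : probability (g_sigma_algebraType (Borel2 d)) R)
  (eps gamma : R)
  (E : R -> set (X * X)) (A : R -> set (set (X * X)))
  (Q : set (g_sigma_algebraType (Borel2 d))) :
  is_metric d -> dcompact d -> is_cont_flow d f ->
  (forall t (B : set (g_sigma_algebraType (Borel2 d))), measurable B ->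
     nu ((pflow f t) @^-1` B) = nu B) ->
  nu.-negligible (NEx d f eps : set (g_sigma_algebraType (Borel2 d))) ->
  0 < gamma -> gamma < eps / 2 ->
  (forall t, 0 < t -> max_separated d f t gamma (E t) /\
     adapted d f t gamma (E t) (A t) /\
     (forall B, A t B -> measurable (B : set (g_sigma_algebraType (Borel2 d))))) ->
  measurable Q ->
  (forall t s, [set (f t p.1, f s p.2) | p in Q] = Q) ->
  forall alpha : R, 0 < alpha ->
  exists t0 : R, forall t : R, 0 < t -> t0 <= t ->
    exists2 S : set (set (X * X)), S `<=` A t &
      (nu ((\bigcup_(B in S) B) `\` Q `|` (Q `\` \bigcup_(B in S) B)) < alpha%:E)%E.
Proof.
move=> dm dc fl nu_inv NE_null g_gt0 g_eps A_adapted mQ Q_inv alpha a_gt0.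
have a2_gt0 : 0 < alpha / 2 by rewrite divr_gt0.
have [K [K_closed KQ nuQK]] := dclosed_inner_approx nu dm _ _ mQ a2_gt0.
pose c := (2 * gamma + eps) / 2.
have gc : 2 * gamma < c by rewrite /c; lra.
have c_eps : c < eps by rewrite /c; lra.
have [n nu_shadow] := shadowing_setD_small dm dc fl nu _ _ _ _ _ K_closed KQ Q_inv c_eps mQ
  NE_null a2_gt0.
exists (2 * n%:R) => t t_gt0 t_ge; pose tau := t / 2.
have [_ [adP mA]] := A_adapted t t_gt0.
exists (cells_meeting (A t) (pflow f tau @^-1` K)) => [C []//|].
set V := \bigcup_(C in _) C.
have mV : measurable (V : set (g_sigma_algebraType (Borel2 d))).
  by apply: (bigcup_adapted_measurable dm dc fl _ _ _ _ _ g_gt0 adP mA) => C [].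
have mY : measurable (V `\` Q `|` (Q `\` V) : set (g_sigma_algebraType (Borel2 d))).
  by apply: measurableU; apply: measurableD.
have Y_sub := pflow_preimage_symdiff_subset dm fl _ _ _ _ adP K Q c tau n%:R Q_inv gc
  ltac:(rewrite /tau; lra) ltac:(rewrite /tau; lra).
have mQK := measurableD mQ (dclosed_measurable _ K_closed).
have mSQ := measurableD (shadowing_measurable dm fl K c n%:R) mQ.
rewrite -(nu_inv (- tau) _ mY).
have := le_measure nu (mem_set (pflow_preimage_measurable f (- tau) _ dm fl mY))
  (mem_set (measurableU _ _ mQK mSQ)) Y_sub.
move/le_lt_trans; apply; have := measureU2 nu mQK mSQ.
by move/le_lt_trans; apply; rewrite [alpha](splitr alpha) EFinD lteD.
Qed.
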